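(* Let $A$ be a real $n\times n$ nonsingular skew-symmetric matrix ($A^t=-A$) and $b\in\mathbb{R}^n$. For each integer $q\ge 0$: (i) The CGNE iterate $x^E_q$, i.e. the unique vector $x^E_q\in\mathcal{K}_q(A^2,Ab)$ satisfying $p^t(b-Ax^E_q)=0$ for all $p\in\mathcal{K}_q(A^2,b)$, lies in $\mathcal{K}_{2q}(A,b)$ and satisfies the Galerkin condition $p^t(b-Ax^E_q)=0$ for all $p\in\mathcal{K}_{2q}(A,b)$. Consequently the Galerkin iterate $x^G_{2q}$ (the unique vector in $\mathcal{K}_{2q}(A,b)$ satisfying this Galerkin condition) equals $x^E_q$. (ii) The CGNR iterate $x^R_q=\operatorname{argmin}_{z\in\mathcal{K}_q(A^2,Ab)}\|b-Az\|$ satisfies $x^R_q=\operatorname{argmin}_{z\in\mathcal{K}_{2q}(A,b)}\|b-Az\|=\operatorname{argmin}_{z\in\mathcal{K}_{2q+1}(A,b)}\|b-Az\|$; that is, with $x^M_m=\operatorname{argmin}_{z\in\mathcal{K}_m(A,b)}\|b-Az\|$ the minimum residual iterates, $x^M_{2q+1}=x^M_{2q}=x^R_q$.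
   Context: For a matrix $B$, a vector $c$ and an integer $m\ge 0$, the Krylov subspace is $\mathcal{K}_m(B,c)=\operatorname{span}\{c,Bc,\ldots,B^{m-1}c\}$ (with $\mathcal{K}_0(B,c)=\{0\}$). $\|\cdot\|$ denotes the Euclidean norm. The minimum residual iterate over a subspace is unique since $A$ is nonsingular. *)

From HB Require Import structures.
From mathcomp Require Import all_boot all_order all_algebra.
Set Implicit Arguments. Unset Strict Implicit. Unset Printing Implicit Defensive.
Import Order.TTheory GRing.Theory Num.Theory.
Local Open Scope ring_scope.

(* Krylov subspace K_m(B,c) = span{c, Bc, ..., B^(m-1) c}, as a membership
   predicate; K_0(B,c) = {0} (empty sum). *)
Definition krylov (R : rcfType) (n m : nat) (B : 'M[R]_n) (c : 'cV[R]_n)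
  (x : 'cV[R]_n) : Prop :=
  exists a : 'I_m -> R, x = \sum_(i < m) a i *: (B ^+ i *m c).

Definition enorm (R : rcfType) (n : nat) (v : 'cV[R]_n) : R :=
  Num.sqrt (\sum_(i < n) v i 0 ^+ 2).

Definition orth_residual (R : rcfType) (n : nat) (S : 'cV[R]_n -> Prop)
  (A : 'M[R]_n) (b x : 'cV[R]_n) : Prop :=
  forall p, S p -> (p^T *m (b - A *m x)) = 0.

Definition is_minres (R : rcfType) (n : nat) (S : 'cV[R]_n -> Prop)
  (A : 'M[R]_n) (b x : 'cV[R]_n) : Prop :=
  S x /\ forall z, S z -> enorm (b - A *m x) <= enorm (b - A *m z).

From HB Require Import structures.
From mathcomp Require Import all_boot all_order all_algebra.
Import Order.TTheory GRing.Theory Num.Theory.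
Set Implicit Arguments. Unset Strict Implicit. Unset Printing Implicit Defensive.
Local Open Scope ring_scope.

(* Write [f i = A^i b].  Skew-symmetry gives [<f i, f j> = (-1)^i <b, f (i+j)>]
   and [<u, A u> = 0], so [f i] and [f j] are orthogonal whenever [i + j] is
   odd: [K_2q(A,b)] is the orthogonal sum of its even part [K_q(A^2,b)] and
   its odd part [K_q(A^2,Ab)], and [A] maps each part into the other parity.
   For [x] odd the residual [b - A x] is even, hence automatically orthogonal
   to the odd part; so the CGNE (resp. CGNR) conditions on the odd part are
   exactly the Galerkin (resp. minimal residual) conditions on [K_2q(A,b)],
   and adding an even component [e] to [x] only adds the odd, hence
   orthogonal, vector [A e] to the residual, which cannot shorten it. *)

Section LeastSquares.
Variable R : realFieldType.

Lemma mulmx_tr_eq0 (k : nat) (u : 'rV[R]_k) : u *m u^T = 0 -> u = 0.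
Proof.
move=> /matrixP /(_ 0 0); rewrite !mxE => sum_sq_eq0.
have sq_ge0 (j : 'I_k) : predT j -> 0 <= u 0 j * u^T j 0.
  by rewrite mxE -expr2 sqr_ge0.
have all_sq0 := psumr_eq0P sq_ge0 sum_sq_eq0.
apply/matrixP => i j; rewrite mxE (ord1 i).
have := all_sq0 j isT.
by rewrite mxE => /eqP; rewrite mulf_eq0 orbb => /eqP.
Qed.

(* The normal equations [M^T M a = M^T v] are solvable because
   [M^T M] and [M] have the same row space. *)
Lemma normal_equations_solvable (n k : nat) (M : 'M[R]_(n, k)) (v : 'cV[R]_n) :
  exists a : 'cV[R]_k, M^T *m (v - M *m a) = 0.
Proof.
have capM : (M^T :&: kermx M = 0)%MS.
  apply/row_matrixP => i; rewrite row0.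
  have : (row i (M^T :&: kermx M) <= M^T :&: kermx M)%MS by exact: row_sub.
  rewrite sub_capmx => /andP[/submxP[w ->] /sub_kermxP wM0].
  by apply: mulmx_tr_eq0; rewrite trmx_mul trmxK !mulmxA wM0 !mul0mx.
have rankMM : \rank (M^T *m M) = \rank M.
  by have := mxrank_mul_ker M^T M; rewrite capM mxrank0 addn0 mxrank_tr.
have sub_MM : (M <= M^T *m M)%MS.
  have [_] := mxrank_leqif_sup (submxMl M^T M); rewrite rankMM eqxx.
  by move/esym.
have /submxP[D vM] : (v^T *m M <= M^T *m M)%MS.
  exact: submx_trans (submxMl _ _) sub_MM.
exists D^T; rewrite mulmxBr.
have -> : M^T *m v = (v^T *m M)^T by rewrite trmx_mul trmxK.
by rewrite vM trmx_mul trmx_mul trmxK mulmxA subrr.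
Qed.

End LeastSquares.

Section Dot.
Variables (R : realFieldType) (n : nat).
Implicit Types u v w : 'cV[R]_n.

Definition dot u v : R := (u^T *m v) 0 0.

Lemma dotE u v : dot u v = \sum_k u k 0 * v k 0.
Proof. by rewrite /dot mxE; apply: eq_bigr => k _; rewrite mxE. Qed.

Lemma dotC u v : dot u v = dot v u.
Proof. by rewrite !dotE; apply: eq_bigr => k _; rewrite mulrC. Qed.

Lemma dotDl u v w : dot (u + v) w = dot u w + dot v w.
Proof. by rewrite /dot linearD mulmxDl mxE. Qed.

Lemma dotZl a u v : dot (a *: u) v = a * dot u v.
Proof. by rewrite /dot linearZ -scalemxAl mxE. Qed.

Lemma dot0l v : dot 0 v = 0.
Proof. by rewrite /dot trmx0 mul0mx mxE. Qed.

Lemma dotNl u v : dot (- u) v = - dot u v.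
Proof. by rewrite -scaleN1r dotZl mulN1r. Qed.

Lemma dotBl u v w : dot (u - v) w = dot u w - dot v w.
Proof. by rewrite dotDl dotNl. Qed.

Lemma dotDr u v w : dot w (u + v) = dot w u + dot w v.
Proof. by rewrite dotC dotDl !(dotC w). Qed.

Lemma dotNr u v : dot v (- u) = - dot v u.
Proof. by rewrite dotC dotNl dotC. Qed.

Lemma dotBr u v w : dot w (u - v) = dot w u - dot w v.
Proof. by rewrite dotDr dotNr. Qed.

Lemma dot_suml (I : Type) (r : seq I) (P : pred I) (F : I -> 'cV[R]_n) v :
  dot (\sum_(i <- r | P i) F i) v = \sum_(i <- r | P i) dot (F i) v.
Proof. exact: (big_morph (dot^~ v) (fun u w => dotDl u w v) (dot0l v)). Qed.

Lemma dot_ge0 u : 0 <= dot u u.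
Proof. by rewrite dotE; apply: sumr_ge0 => k _; rewrite -expr2 sqr_ge0. Qed.

Lemma dot_eq0 u : dot u u = 0 -> u = 0.
Proof.
move=> uu0; suff uT0 : u^T = 0 by rewrite -[u]trmxK uT0 trmx0.
apply: mulmx_tr_eq0; apply/matrixP => i j.
by rewrite (ord1 i) (ord1 j) trmxK [RHS]mxE.
Qed.

Lemma tr_mulmx_eq0 u v : (u^T *m v = 0) <-> (dot u v = 0).
Proof.
split=> uv0; first by rewrite /dot uv0 mxE.
by apply/matrixP => i j; rewrite (ord1 i) (ord1 j) [RHS]mxE.
Qed.

Lemma orth_projection_exists (F : nat -> 'cV[R]_n) (q : nat) v :
  exists d : nat -> R,
    forall j, (j < q)%N -> dot (F j) (v - \sum_(0 <= i < q) d i *: F i) = 0.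
Proof.
pose M := \matrix_(i < n, j < q) F j i 0.
have [a Ma] := normal_equations_solvable M v.
pose d j := oapp (fun k : 'I_q => a k 0) 0 (insub j).
exists d => j ltjq.
have -> : \sum_(0 <= i < q) d i *: F i = M *m a.
  rewrite big_mkord; apply/matrixP => r c; rewrite (ord1 c) summxE mxE.
  by apply: eq_bigr => k _; rewrite !mxE /d valK /= mulrC.
transitivity ((M^T *m (v - M *m a)) (Ordinal ltjq) 0); last by rewrite Ma mxE.
by rewrite dotE mxE; apply: eq_bigr => k _; rewrite !mxE.
Qed.

End Dot.

Section Residuals.
Variables (R : rcfType) (n : nat).
Implicit Types (u w : 'cV[R]_n) (S : 'cV[R]_n -> Prop).

Lemma enorm_le_addr_orth u w : dot u w = 0 -> enorm u <= enorm (u + w).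
Proof.
have enormE v : enorm v = Num.sqrt (dot v v).
  by rewrite dotE /enorm; congr Num.sqrt; apply: eq_bigr => k _; rewrite expr2.
move=> uw0; rewrite !enormE ler_sqrt ?dot_ge0 //.
by rewrite dotDl !dotDr uw0 (dotC w u) uw0 addr0 add0r lerDl dot_ge0.
Qed.

Lemma orth_residual_dot S (A : 'M[R]_n) (b x : 'cV[R]_n) :
  orth_residual S A b x <-> forall p, S p -> dot p (b - A *m x) = 0.
Proof. by split=> orth p Sp; apply/tr_mulmx_eq0; apply: orth. Qed.

End Residuals.

Lemma krylov_nat (R : rcfType) (n m : nat) (B : 'M[R]_n) (c x : 'cV[R]_n) :
  krylov m B c x <->
  exists a : nat -> R, x = \sum_(0 <= i < m) a i *: (B ^+ i *m c).
Proof.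
split=> [[a ->]|[a ->]].
  exists (fun k => oapp a 0 (insub k : option 'I_m)).
  by rewrite big_mkord; apply: eq_bigr => i _; rewrite valK.
by exists (fun i : 'I_m => a i); rewrite big_mkord.
Qed.

Lemma krylovS (R : rcfType) (n m : nat) (B : 'M[R]_n) (c x : 'cV[R]_n) :
  krylov m B c x -> krylov m.+1 B c x.
Proof.
move=> /krylov_nat[a ->]; apply/krylov_nat.
exists (fun i => if (i < m)%N then a i else 0).
rewrite big_nat_recr //= ltnn scale0r addr0.
by apply: eq_big_nat => i /andP[_ ->].
Qed.

Lemma krylovB (R : rcfType) (n m : nat) (B : 'M[R]_n) (c x y : 'cV[R]_n) :
  krylov m B c x -> krylov m B c y -> krylov m B c (x - y).
Proof.
move=> [a ->] [a' ->]; exists (fun i => a i - a' i).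
by rewrite -sumrB; apply: eq_bigr => i _; rewrite scalerBl.
Qed.

Lemma big_nat_even_odd (V : nmodType) (G : nat -> V) (q : nat) :
  \sum_(0 <= i < 2 * q) G i =
  \sum_(0 <= j < q) G (2 * j)%N + \sum_(0 <= j < q) G (2 * j).+1.
Proof.
elim: q => [|q IH]; first by rewrite muln0 !big_nil addr0.
by rewrite mulnSr addn2 !big_nat_recr //= IH -addrA addrACA.
Qed.

Section SkewKrylov.
Variables (R : rcfType) (n : nat) (A : 'M[R]_n) (b : 'cV[R]_n).
Hypothesis A_skew : A^T = - A.

Lemma dot_skew (u v : 'cV[R]_n) : dot u (A *m v) = - dot (A *m u) v.
Proof. by rewrite /dot trmx_mul A_skew mulmxN mulNmx mulmxA [in RHS]mxE opprK. Qed.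

Lemma dot_skew_self (u : 'cV[R]_n) : dot u (A *m u) = 0.
Proof.
apply/eqP; rewrite -[_ == 0](mulrn_eq0 _ 2) mulr2n.
by rewrite {1}dot_skew dotC addNr.
Qed.

Definition kgen i := A ^+ i *m b.

Lemma kgenS i : kgen i.+1 = A *m kgen i.
Proof. by rewrite /kgen exprS -mulmxE mulmxA. Qed.

Lemma kgen0 : kgen 0 = b.
Proof. by rewrite /kgen expr0 mul1mx. Qed.

Lemma dot_kgen i j : dot (kgen i) (kgen j) = (-1) ^+ i * dot b (kgen (i + j)).
Proof.
elim: i j => [|i IH] j; first by rewrite expr0 mul1r kgen0.
by rewrite kgenS -[LHS]opprK -dot_skew -kgenS IH exprS mulN1r mulNr addnS.
Qed.

Lemma dot_b_kgen_odd k : dot b (kgen k.*2.+1) = 0.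
Proof.
have := dot_kgen k k.+1; rewrite kgenS dot_skew_self addnS addnn => /esym/eqP.
by rewrite mulf_eq0 signr_eq0 => /eqP.
Qed.

Lemma dot_kgen_odd i j : odd (i + j) -> dot (kgen i) (kgen j) = 0.
Proof.
move=> odd_ij; rewrite dot_kgen -(odd_double_half (i + j)) odd_ij add1n.
by rewrite dot_b_kgen_odd mulr0.
Qed.

Definition kcomb (sig : nat -> nat) (m : nat) (a : nat -> R) : 'cV[R]_n :=
  \sum_(0 <= i < m) a i *: kgen (sig i).

Local Notation ev := (fun j => 2 * j)%N.
Local Notation od := (fun j => (2 * j).+1)%N.

Lemma mulmx_kcomb sig m a : A *m kcomb sig m a = kcomb (fun i => (sig i).+1) m a.
Proof.
by rewrite mulmx_sumr; apply: eq_bigr => i _; rewrite kgenS -scalemxAr.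
Qed.

Lemma kcomb0 sig m : kcomb sig m (fun _ => 0) = 0.
Proof. by rewrite /kcomb big1 // => i _; rewrite scale0r. Qed.

Lemma kcombB sig m a c :
  kcomb sig m a - kcomb sig m c = kcomb sig m (fun i => a i - c i).
Proof. by rewrite /kcomb -sumrB; apply: eq_bigr => i _; rewrite scalerBl. Qed.

Lemma kcomb_b : b = kcomb (fun _ => 0%N) 1 (fun _ => 1).
Proof. by rewrite /kcomb big_nat1 scale1r kgen0. Qed.

Lemma kcomb_orth sig m a v :
  (forall i, (i < m)%N -> dot (kgen (sig i)) v = 0) -> dot (kcomb sig m a) v = 0.
Proof.
move=> orth; rewrite dot_suml big_nat big1 // => i /andP[_ ltim].
by rewrite dotZl orth ?mulr0.
Qed.

Lemma dot_kcomb_odd sig tau m m' a c : (forall i j, odd (sig i + tau j)) ->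
  dot (kcomb sig m a) (kcomb tau m' c) = 0.
Proof.
move=> odd_st; apply: kcomb_orth => i _; rewrite dotC.
by apply: kcomb_orth => j _; rewrite dot_kgen_odd // addnC.
Qed.

Lemma krylov_kcomb m x : krylov m A b x <-> exists a, x = kcomb id m a.
Proof. exact: krylov_nat. Qed.

Lemma krylov_sq_kcomb q x : krylov q (A ^+ 2) b x <-> exists a, x = kcomb ev q a.
Proof.
have sqE a : \sum_(0 <= i < q) a i *: ((A ^+ 2) ^+ i *m b) = kcomb ev q a.
  by apply: eq_bigr => i _; rewrite /kgen exprM.
split=> [/krylov_nat[a ->]|[a ->]]; last apply/krylov_nat; by exists a; rewrite sqE.
Qed.

Lemma krylov_sq_A_kcomb q x :
  krylov q (A ^+ 2) (A *m b) x <-> exists a, x = kcomb od q a.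
Proof.
have sqE a : \sum_(0 <= i < q) a i *: ((A ^+ 2) ^+ i *m (A *m b)) = kcomb od q a.
  apply: eq_bigr => i _.
  by rewrite /kgen [A ^+ (2 * _).+1]exprSr -mulmxE -mulmxA exprM.
split=> [/krylov_nat[a ->]|[a ->]]; last apply/krylov_nat; by exists a; rewrite sqE.
Qed.

Definition interleave (c d : nat -> R) i := if odd i then d i./2 else c i./2.

Lemma kcomb_even_odd q a :
  kcomb id (2 * q) a = kcomb ev q (a \o ev) + kcomb od q (a \o od).
Proof. exact: big_nat_even_odd. Qed.

Lemma kcomb_interleave q c d :
  kcomb id (2 * q) (interleave c d) = kcomb ev q c + kcomb od q d.
Proof.
rewrite kcomb_even_odd /interleave; congr (_ + _); apply: eq_bigr => j _ /=.
  by rewrite oddM /= mul2n doubleK.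
by rewrite oddM /= mul2n uphalf_double.
Qed.

Lemma krylov_double q x :
  krylov (2 * q) A b x <-> exists c d, x = kcomb ev q c + kcomb od q d.
Proof.
split=> [/krylov_kcomb[a ->]|[c [d ->]]]; last apply/krylov_kcomb.
  by exists (a \o ev), (a \o od); rewrite kcomb_even_odd.
by exists (interleave c d); rewrite kcomb_interleave.
Qed.

Lemma krylov_doubleS q x :
  krylov (2 * q).+1 A b x <-> exists c d, x = kcomb ev q.+1 c + kcomb od q d.
Proof.
have splitS a :
    kcomb id (2 * q).+1 a = kcomb id (2 * q) a + a (2 * q)%N *: kgen (2 * q).
  exact: big_nat_recr.
split=> [/krylov_kcomb[a ->]|[c [d ->]]]; last apply/krylov_kcomb.
  exists (a \o ev), (a \o od).
  by rewrite splitS kcomb_even_odd /kcomb big_nat_recr //= addrAC.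
exists (interleave c d); rewrite splitS kcomb_interleave /kcomb big_nat_recr //=.
by rewrite addrAC /interleave oddM /= mul2n doubleK.
Qed.

Lemma krylov_sq_A_double q x : krylov q (A ^+ 2) (A *m b) x -> krylov (2 * q) A b x.
Proof.
move=> /krylov_sq_A_kcomb[d ->]; apply/krylov_double.
by exists (fun _ => 0), d; rewrite kcomb0 add0r.
Qed.

Lemma cgne_galerkin q x :
  krylov q (A ^+ 2) (A *m b) x -> orth_residual (krylov q (A ^+ 2) b) A b x ->
  orth_residual (krylov (2 * q) A b) A b x.
Proof.
move=> /krylov_sq_A_kcomb[d ->] /orth_residual_dot orth_ev.
apply/orth_residual_dot => _ /krylov_double[c [e ->]].
rewrite dotDl orth_ev; last by apply/krylov_sq_kcomb; exists c.
rewrite add0r mulmx_kcomb {1}kcomb_b dotBr !dot_kcomb_odd ?subrr //.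
  by move=> i j; rewrite oddD /= !oddM.
by move=> i j; rewrite oddD /= !oddM.
Qed.

Hypothesis A_unit : A \in unitmx.

(* Write [w = e + o] with [e] even and [o] odd.  Testing against [A e] (odd)
   gives [|A e|^2 = 0]; testing against the even [p] with [A p = o] gives
   [-|o|^2 = 0]. *)
Lemma skew_galerkin_kernel q w : krylov (2 * q) A b w ->
  (forall p, krylov (2 * q) A b p -> dot p (A *m w) = 0) -> w = 0.
Proof.
move=> /krylov_double[c [d ->]] orth.
have e0 : kcomb ev q c = 0.
  have Ae : A *m kcomb ev q c = kcomb od q c by rewrite mulmx_kcomb.
  have Ae_in : krylov (2 * q) A b (kcomb od q c).
    by apply/krylov_double; exists (fun _ => 0), c; rewrite kcomb0 add0r.
  have := orth _ Ae_in.
  rewrite mulmxDr dotDr Ae mulmx_kcomb [X in _ + X]dot_kcomb_odd.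
    rewrite addr0 => /dot_eq0 Ae0.
    by rewrite -(mulKmx A_unit (kcomb ev q c)) Ae Ae0 mulmx0.
  by move=> i j; rewrite oddD /= !oddM.
have o0 : kcomb od q d = 0.
  have Ap : A *m kcomb ev q d = kcomb od q d by rewrite mulmx_kcomb.
  have p_in : krylov (2 * q) A b (kcomb ev q d).
    by apply/krylov_double; exists d, (fun _ => 0); rewrite kcomb0 addr0.
  have := orth _ p_in; rewrite e0 add0r -Ap dot_skew Ap => /eqP.
  by rewrite oppr_eq0 => /eqP /dot_eq0.
by rewrite e0 o0 addr0.
Qed.

Lemma galerkin_iterate_unique q x y :
  krylov (2 * q) A b x -> krylov (2 * q) A b y ->
  orth_residual (krylov (2 * q) A b) A b x ->
  orth_residual (krylov (2 * q) A b) A b y -> y = x.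
Proof.
move=> Kx Ky /orth_residual_dot orth_x /orth_residual_dot orth_y.
apply/eqP; rewrite -subr_eq0; apply/eqP.
apply: (skew_galerkin_kernel (krylovB Ky Kx)).
move=> p Kp; have -> : A *m (y - x) = (b - A *m x) - (b - A *m y).
  by rewrite mulmxBr opprB [RHS]addrC addrA subrK.
by rewrite dotBr orth_x ?orth_y ?subrr.
Qed.

Lemma cgne_exists q : exists x,
  krylov q (A ^+ 2) (A *m b) x /\ orth_residual (krylov q (A ^+ 2) b) A b x.
Proof.
have [d orth] := orth_projection_exists (fun j => kgen (2 * j).+1) q (invmx A *m b).
exists (kcomb od q d); split; first by apply/krylov_sq_A_kcomb; exists d.
apply/orth_residual_dot => _ /krylov_sq_kcomb[c ->].
have -> : b - A *m kcomb od q d = A *m (invmx A *m b - kcomb od q d).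
  by rewrite mulmxBr mulmxA mulmxV // mul1mx.
by apply: kcomb_orth => j ltjq; rewrite dot_skew -kgenS orth ?oppr0.
Qed.

Lemma cgnr_exists q : exists x, is_minres (krylov q (A ^+ 2) (A *m b)) A b x.
Proof.
have [d orth] := orth_projection_exists (fun j => kgen (2 * j).+2) q b.
exists (kcomb od q d); split=> [|_ /krylov_sq_A_kcomb[e ->]].
  by apply/krylov_sq_A_kcomb; exists d.
set evS := fun i => (2 * i).+2; rewrite !mulmx_kcomb.
have -> : b - kcomb evS q e = (b - kcomb evS q d) + kcomb evS q (fun i => d i - e i).
  by rewrite -kcombB addrA subrK.
apply: enorm_le_addr_orth; rewrite dotC; apply: kcomb_orth => j ltjq.
exact: orth.
Qed.

Lemma cgnr_minres_odd q x : is_minres (krylov q (A ^+ 2) (A *m b)) A b x ->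
  is_minres (krylov (2 * q).+1 A b) A b x.
Proof.
move=> [/krylov_sq_A_kcomb[d ->] min_x]; split.
  by apply/krylov_doubleS; exists (fun _ => 0), d; rewrite kcomb0 add0r.
move=> _ /krylov_doubleS[c [e ->]].
have Ke : krylov q (A ^+ 2) (A *m b) (kcomb od q e).
  by apply/krylov_sq_A_kcomb; exists e.
apply: le_trans (min_x _ Ke) _.
rewrite mulmxDr opprD addrA addrAC; apply: enorm_le_addr_orth.
rewrite !mulmx_kcomb dotNr dotBl {1}kcomb_b !dot_kcomb_odd ?subrr ?oppr0 //.
  by move=> i j; rewrite oddD /= !oddM.
by move=> i j; rewrite oddD /= !oddM.
Qed.

Lemma cgnr_minres_even q x : is_minres (krylov q (A ^+ 2) (A *m b)) A b x ->
  is_minres (krylov (2 * q) A b) A b x.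
Proof.
move=> min_x; have [_ min_odd] := cgnr_minres_odd min_x; split.
  exact: krylov_sq_A_double min_x.1.
by move=> z /krylovS; exact: min_odd.
Qed.

End SkewKrylov.

Theorem theorem1 (R : rcfType) (n : nat) (A : 'M[R]_n) (b : 'cV[R]_n)
  (hA : A \in unitmx) (hskew : A^T = - A) (q : nat) :
  ((exists x, krylov q (A ^+ 2) (A *m b) x /\
              orth_residual (krylov q (A ^+ 2) b) A b x) /\
   forall x, krylov q (A ^+ 2) (A *m b) x ->
             orth_residual (krylov q (A ^+ 2) b) A b x ->
     krylov (2 * q) A b x /\
     orth_residual (krylov (2 * q) A b) A b x /\
     (forall y, krylov (2 * q) A b y ->
                orth_residual (krylov (2 * q) A b) A b y -> y = x)) /\
  ((exists x, is_minres (krylov q (A ^+ 2) (A *m b)) A b x) /\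
   forall x, is_minres (krylov q (A ^+ 2) (A *m b)) A b x ->
     is_minres (krylov (2 * q) A b) A b x /\
     is_minres (krylov (2 * q).+1 A b) A b x).
Proof.
split; split.
- exact: cgne_exists.
- move=> x Kx orth_x.
  have K2x := krylov_sq_A_double Kx.
  have orth2_x := cgne_galerkin hskew Kx orth_x.
  split=> //; split=> // y K2y orth2_y.
  exact: galerkin_iterate_unique K2x K2y orth2_x orth2_y.
- exact: cgnr_exists.
- by move=> x min_x; split; [exact: cgnr_minres_even | exact: cgnr_minres_odd].
Qed.
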